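(* Let $\Omega$ be a finite set and let $u,v \in \mathrm{Sym}(\Omega)$. Let $\Phi\subseteq \mathrm{fix}([u,v]) \cap \mathrm{supp}(u)$ and $\Psi \subseteq \mathrm{supp}(v u v^{-1})\cap \mathrm{supp}(u)$. Then $$|\mathrm{supp}([u,v])| \le 2|\mathrm{supp}(u)| - |\Phi| - |\Psi|.$$
   Context: Permutations act on the right, written $\alpha^{u}$, and products are composed left to right: $\alpha^{uv}=(\alpha^u)^v$. The commutator is $[u,v] = uvu^{-1}v^{-1}$. For a permutation $x$, $\mathrm{supp}(x)=\{\alpha\in\Omega \mid \alpha^x\neq\alpha\}$ and $\mathrm{fix}(x)=\{\alpha\in\Omega\mid \alpha^x=\alpha\}$. *)

From mathcomp Require Import all_boot all_order all_algebra all_fingroup.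
Set Implicit Arguments. Unset Strict Implicit. Unset Printing Implicit Defensive.

(* MathComp permutations compose left to right: (s * t) x = t (s x)  (permM),
   matching the paper's right-action convention alpha^(uv) = (alpha^u)^v. *)

Definition supp (T : finType) (x : {perm T}) : {set T} := [set a | x a != a].
Definition fixp (T : finType) (x : {perm T}) : {set T} := [set a | x a == a].
(* the paper's commutator [u,v] = u v u^-1 v^-1 (NOT mathcomp's [~ u, v]) *)
Definition pcomm (T : finType) (u v : {perm T}) : {perm T} :=
  (u * v * u^-1 * v^-1)%g.

From mathcomp Require Import all_boot all_order all_algebra all_fingroup.
From mathcomp Require Import zify.
Import GRing.Theory.
Local Open Scope ring_scope.

Set Implicit Arguments.
Unset Strict Implicit.
Unset Printing Implicit Defensive.

(* Since [u,v] = u (v u v^-1)^-1, every point moved by [u,v] is moved by u or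
   by the conjugate w = v u v^-1, so supp [u,v] lies in supp u ∪ supp w.  The
   points of Phi also lie there, outside supp [u,v], while Psi lies in
   supp u ∩ supp w.  Inclusion-exclusion and |supp w| = |supp u| conclude. *)

Section PermSupport.

Variable T : finType.
Implicit Types x y u v : {perm T}.

Lemma suppM x y : supp (x * y)%g \subset supp x :|: supp y.
Proof.
apply/subsetP => a; rewrite !inE permM; apply: contraR.
by rewrite negb_or !negbK => /andP[/eqP-> /eqP->].
Qed.

Lemma suppV x : supp x^-1%g = supp x.
Proof.
apply/setP => a; rewrite !inE; apply/idP/idP; apply: contra => /eqP xa.
  by rewrite -{1}xa permK.
by rewrite -{1}xa permKV.
Qed.

Lemma supp_conj x y : supp (y * x * y^-1)%g = y @^-1: supp x.
Proof.
apply/setP => a; rewrite !inE !permM.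
by rewrite (can2_eq (permKV y) (permK y)).
Qed.

Lemma card_supp_conj x y : #|supp (y * x * y^-1)%g| = #|supp x|.
Proof. by rewrite supp_conj card_preimset //; apply: perm_inj. Qed.

Lemma pcommE u v : pcomm u v = (u * (v * u * v^-1)^-1)%g.
Proof. by rewrite /pcomm !invMg invgK !mulgA. Qed.

Lemma supp_pcomm u v : supp (pcomm u v) \subset supp u :|: supp (v * u * v^-1)%g.
Proof. by rewrite pcommE -[X in _ :|: X]suppV suppM. Qed.

End PermSupport.

Lemma card_disjoint_cover (T : finType) (A P B C Q : {set T}) :
    [disjoint A & P] -> A :|: P \subset B :|: C -> Q \subset B :&: C ->
  (#|A| + #|P| + #|Q| <= #|B| + #|C|)%N.
Proof.
move=> /disjoint_setI0 AP0 /subset_leq_card leAPBC /subset_leq_card leQBC.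
have := cardsUI A P; have := cardsUI B C; rewrite AP0 cards0; lia.
Qed.

Theorem lemma2p1 (T : finType) (u v : {perm T}) (Phi Psi : {set T}) :
  Phi \subset fixp (pcomm u v) :&: supp u ->
  Psi \subset supp (v * u * v^-1)%g :&: supp u ->
  (#|supp (pcomm u v)|%:Z <= 2 * #|supp u|%:Z - #|Phi|%:Z - #|Psi|%:Z)%R.
Proof.
rewrite subsetI => /andP[PhiFix PhiU]; rewrite setIC => PsiUW.
have disj : [disjoint supp (pcomm u v) & Phi].
  rewrite disjoint_sym disjoint_subset; apply: subset_trans PhiFix _.
  by apply/subsetP => a; rewrite !inE negbK.
have cover : supp (pcomm u v) :|: Phi \subset supp u :|: supp (v * u * v^-1)%g.
  by rewrite subUset supp_pcomm (subset_trans PhiU) ?subsetUl.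
have := card_disjoint_cover disj cover PsiUW.
rewrite card_supp_conj; lia.
Qed.
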